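(* Let $\mathcal V$ be a congruence-modular variety and $A\in\mathcal V$ such that $[\theta,\nabla_A]_A=\theta$ for all $\theta\in\mathrm{Con}(A)$. Then $A/\theta^\perp$ is semiprime for every $\theta\in\mathrm{Con}(A)$ if and only if $A$ is semiprime.
   Context: For an algebra $M$, $\mathrm{Con}(M)$ is its congruence lattice with bottom $\Delta_M$ and top $\nabla_M=M^2$, and $[\cdot,\cdot]_M$ is the term condition commutator: for $\alpha,\beta,\mu\in\mathrm{Con}(M)$, $C(\alpha,\beta;\mu)$ means that for all $n,k$, every $(n+k)$-ary term $t$, all $(a_i,b_i)\in\alpha$ and $(c_j,d_j)\in\beta$: $(t(\bar a,\bar c),t(\bar a,\bar d))\in\mu$ iff $(t(\bar b,\bar c),t(\bar b,\bar d))\in\mu$; $[\alpha,\beta]_M=\bigcap\{\mu: C(\alpha,\beta;\mu)\}$. A congruence $\phi\neq\nabla_M$ is prime if $[\alpha,\beta]_M\subseteq\phi$ implies $\alpha\subseteq\phi$ or $\beta\subseteq\phi$; $\rho_M(\theta)$ is the intersection of all prime congruences containing $\theta$ (equal to $\nabla_M$ if there are none); $M$ is semiprime if $\rho_M(\Delta_M)=\Delta_M$. For $\beta\in\mathrm{Con}(A)$, $\beta^\perp=\bigvee\{\alpha\in\mathrm{Con}(A):[\alpha,\beta]_A=\Delta_A\}$. *)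

From mathcomp Require Import ssreflect ssrfun ssrbool eqtype ssrnat fintype.
Set Warnings "-notation-overridden".
From Stdlib Require Import ClassicalEpsilon.

Set Implicit Arguments.
Unset Strict Implicit.
Unset Printing Implicit Defensive.

Record signature := Signature { op_sym : Type; arity : op_sym -> nat }.

Record algebra (s : signature) := Algebra {
  carrier :> Type;
  interp : forall o : op_sym s, ('I_(arity o) -> carrier) -> carrier }.

Inductive term (s : signature) (X : Type) : Type :=
  | Var : X -> term s X
  | App : forall o : op_sym s, ('I_(arity o) -> term s X) -> term s X.

Fixpoint eval (s : signature) (A : algebra s) (X : Type) (env : X -> A)
  (t : term s X) : A :=
  match t with
  | Var x => env x
  | App o ts => @interp s A o (fun i => eval env (ts i))
  end.

Definition rel_of (T : Type) := T -> T -> Prop.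
Definition rsub (T : Type) (R S : rel_of T) := forall x y, R x y -> S x y.
Definition releq (T : Type) (R S : rel_of T) := rsub R S /\ rsub S R.
Definition rmeet (T : Type) (R S : rel_of T) : rel_of T := fun x y => R x y /\ S x y.

Definition is_con (s : signature) (A : algebra s) (th : rel_of A) : Prop :=
  (forall x, th x x) /\ (forall x y, th x y -> th y x) /\
  (forall x y z, th x y -> th y z -> th x z) /\
  (forall (o : op_sym s) (a b : 'I_(arity o) -> A),
      (forall i, th (a i) (b i)) -> th (@interp s A o a) (@interp s A o b)).

Definition Delta (s : signature) (A : algebra s) : rel_of A := fun x y => x = y.
Definition Nabla (s : signature) (A : algebra s) : rel_of A := fun _ _ => True.
Arguments Delta {s} A _ _.
Arguments Nabla {s} A _ _.

Definition cg (s : signature) (A : algebra s) (R : rel_of A) : rel_of A :=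
  fun x y => forall th, is_con th -> rsub R th -> th x y.

Definition cjoin (s : signature) (A : algebra s) (al be : rel_of A) : rel_of A :=
  cg (fun x y => al x y \/ be x y).
Definition cbigjoin (s : signature) (A : algebra s) (F : rel_of A -> Prop) : rel_of A :=
  cg (fun x y => exists al, F al /\ al x y).

Definition sumenv (T : Type) (n k : nat) (a : 'I_n -> T) (c : 'I_k -> T)
  (v : 'I_n + 'I_k) : T :=
  match v with inl i => a i | inr j => c j end.

Definition TC (s : signature) (A : algebra s) (al be mu : rel_of A) : Prop :=
  forall (n k : nat) (t : term s ('I_n + 'I_k)) (a b : 'I_n -> A) (c d : 'I_k -> A),
    (forall i, al (a i) (b i)) -> (forall j, be (c j) (d j)) ->
    (mu (eval (sumenv a c) t) (eval (sumenv a d) t) <->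
     mu (eval (sumenv b c) t) (eval (sumenv b d) t)).

Definition comm (s : signature) (A : algebra s) (al be : rel_of A) : rel_of A :=
  fun x y => forall mu, is_con mu -> TC al be mu -> mu x y.

Definition prime_con (s : signature) (A : algebra s) (phi : rel_of A) : Prop :=
  is_con phi /\ ~ releq phi (Nabla A) /\
  forall al be, is_con al -> is_con be ->
    rsub (comm al be) phi -> rsub al phi \/ rsub be phi.

Definition rho (s : signature) (A : algebra s) (th : rel_of A) : rel_of A :=
  fun x y => forall phi, prime_con phi -> rsub th phi -> phi x y.

Definition semiprime (s : signature) (A : algebra s) : Prop :=
  releq (rho (Delta A)) (Delta A).

Definition perp (s : signature) (A : algebra s) (be : rel_of A) : rel_of A :=
  cbigjoin (fun al => is_con al /\ releq (comm al be) (Delta A)).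

(* Quotient algebra A / th (meaningful when th is a congruence):
   elements are the classes th a, operations act on chosen representatives. *)
Definition qcarrier (s : signature) (A : algebra s) (th : rel_of A) : Type :=
  { P : A -> Prop | exists a, P = th a }.

Definition qclass (s : signature) (A : algebra s) (th : rel_of A) (a : A)
  : qcarrier th := exist _ (th a) (ex_intro _ a erefl).

Definition qrep (s : signature) (A : algebra s) (th : rel_of A)
  (q : qcarrier th) : A :=
  proj1_sig (constructive_indefinite_description _ (proj2_sig q)).

Definition quotient (s : signature) (A : algebra s) (th : rel_of A) : algebra s :=
  @Algebra s (qcarrier th)
    (fun o args => qclass th (@interp s A o (fun i => qrep (args i)))).

(* Varieties as equational classes (Birkhoff): given by a set of identities. *)
Definition models (s : signature) (A : algebra s)
  (Sigma : term s nat -> term s nat -> Prop) : Prop :=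
  forall l r, Sigma l r -> forall env : nat -> A, eval env l = eval env r.

Definition con_modular (s : signature) (A : algebra s) : Prop :=
  forall al be ga : rel_of A, is_con al -> is_con be -> is_con ga ->
    rsub al ga ->
    releq (cjoin al (rmeet be ga)) (rmeet (cjoin al be) ga).

Definition congruence_modular_variety (s : signature)
  (Sigma : term s nat -> term s nat -> Prop) : Prop :=
  forall B : algebra s, models B Sigma -> con_modular B.

(* Semiprimeness of a quotient A/φ is governed by the primes
   of A containing φ: every prime ψ ⊇ φ of A descends to a prime ψ/φ of A/φ,
   because the term condition pulls back along the projection A → A/φ.
   - (⇐) If A is semiprime then every annihilator θ^⊥ is an intersection of
     primes: the meet ψ of the primes not containing θ satisfies [ψ, θ] ⊆
     every prime, hence [ψ, θ] = Δ and ψ ⊆ θ^⊥; conversely θ^⊥ lies in each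
     such prime.  A congruence φ with ρ(φ) = φ yields a semiprime A/φ.
   - (⇒) Since [α, ∇] = α, the only α with [α, ∇] = Δ is Δ, so ∇^⊥ = Δ and
     A/∇^⊥ is A up to isomorphism; primes of A/Δ pull back to primes of A. *)
From Stdlib Require Import Classical ClassicalEpsilon ProofIrrelevance FunctionalExtensionality
  PropExtensionality.
From mathcomp Require Import ssreflect ssrfun ssrbool eqtype ssrnat fintype.

Set Implicit Arguments.
Unset Strict Implicit.

Section Congruences.
Variables (s : signature) (A : algebra s).

Lemma eval_con (th : rel_of A) X (t : term s X) (e1 e2 : X -> A) :
  is_con th -> (forall v, th (e1 v) (e2 v)) -> th (eval e1 t) (eval e2 t).
Proof.
case=> _ [_ [_ Hc]] He; elim: t => [x|o ts IH] /=; [exact: He | exact: Hc].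
Qed.

Lemma meet_con (P : rel_of A -> Prop) :
  (forall phi, P phi -> is_con phi) -> is_con (fun x y => forall phi, P phi -> phi x y).
Proof.
move=> HP; split; [|split; [|split]].
- by move=> x phi /HP [Hr _].
- by move=> x y H phi Pphi; case: (HP _ Pphi) => _ [Hs _]; apply: Hs; apply: H.
- move=> x y z H1 H2 phi Pphi; case: (HP _ Pphi) => _ [_ [Ht _]].
  exact: Ht (H1 _ Pphi) (H2 _ Pphi).
- move=> o a b H phi Pphi; case: (HP _ Pphi) => _ [_ [_ Hc]].
  by apply: Hc => i; apply: H.
Qed.

Lemma con_ext (R S : rel_of A) : is_con R -> (forall x y, R x y <-> S x y) -> is_con S.
Proof.
move=> [Hr [Hs [Ht Hc]]] E; split; [|split; [|split]].
- by move=> x; apply/E.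
- by move=> x y /E /Hs /E.
- by move=> x y z /E H1 /E H2; apply/E; apply: Ht H1 H2.
- by move=> o a b H; apply/E/Hc => i; apply/E.
Qed.

Lemma cg_con (R : rel_of A) : is_con (cg R).
Proof.
have Hmeet := @meet_con (fun th => is_con th /\ rsub R th) (fun th => @proj1 _ _).
apply: (con_ext Hmeet).
by move=> x y; split=> H th; [move=> Hth HR; apply: H | case; apply: H].
Qed.

Lemma cg_sub (R : rel_of A) : rsub R (cg R).
Proof. by move=> x y H th _ HR; apply: HR. Qed.

Lemma cg_min (R th : rel_of A) : is_con th -> rsub R th -> rsub (cg R) th.
Proof. by move=> Hth HR x y H; apply: H. Qed.

Lemma Delta_con : is_con (Delta A).
Proof.
rewrite /is_con /Delta; split; [|split; [|split]].
- by [].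
- by move=> x y E; subst.
- by move=> x y z E1 E2; subst.
- by move=> o a b /functional_extensionality E; subst.
Qed.

Lemma Delta_min (th : rel_of A) : is_con th -> rsub (Delta A) th.
Proof. by case=> Hr _ x y E; rewrite /Delta in E; subst; apply: Hr. Qed.

Lemma Nabla_con : is_con (Nabla A).
Proof. by split; [|split; [|split]]. Qed.

Lemma rho_ext (th : rel_of A) : rsub th (rho th).
Proof. by move=> x y H phi _ Hsub; apply: Hsub. Qed.

Lemma semiprimeP : rsub (rho (Delta A)) (Delta A) -> semiprime A.
Proof. by move=> H; split => //; apply: rho_ext. Qed.

End Congruences.

Section Commutator.
Variables (s : signature) (A : algebra s).
Implicit Types al be : rel_of A.

Lemma TC_right al be : is_con be -> TC al be be.
Proof.
move=> Hbe n k t a b c d _ Hcd.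
have H a0 : be (eval (sumenv a0 c) t) (eval (sumenv a0 d) t).
  by apply: eval_con => // -[i|j] /=; [apply: (proj1 Hbe) | apply: Hcd].
by split=> _; apply: H.
Qed.

Lemma TC_left al be : is_con al -> TC al be al.
Proof.
move=> Hal n k t a b c d Hab _.
have H c0 : al (eval (sumenv a c0) t) (eval (sumenv b c0) t).
  by apply: eval_con => // -[i|j] /=; [apply: Hab | apply: (proj1 Hal)].
case: (Hal) => _ [Hs [Ht _]]; split=> H1.
- exact: Ht (Hs _ _ (H c)) (Ht _ _ _ H1 (H d)).
- exact: Ht (H c) (Ht _ _ _ H1 (Hs _ _ (H d))).
Qed.

Lemma comm_subl al be : is_con al -> rsub (comm al be) al.
Proof. by move=> Hal x y H; apply: H => //; apply: TC_left. Qed.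

Lemma comm_subr al be : is_con be -> rsub (comm al be) be.
Proof. by move=> Hbe x y H; apply: H => //; apply: TC_right. Qed.

Lemma comm_refl al be : rsub (Delta A) (comm al be).
Proof. by move=> x y E mu [Hr _] _; rewrite /Delta in E; subst; apply: Hr. Qed.

End Commutator.

Section Quotient.
Variables (s : signature) (A : algebra s) (th : rel_of A).
Hypothesis Hth : is_con th.

Lemma qclass_eq x y : qclass th x = qclass th y <-> th x y.
Proof.
case: Hth => Hr [Hs [Ht _]]; split.
- by move=> /(f_equal (@proj1_sig _ _)) /= ->; apply: Hr.
- move=> H; apply: subset_eq_compat; apply: functional_extensionality => z.
  by apply: propositional_extensionality; split => /=; [apply: Ht; apply: Hs|apply: Ht].
Qed.

Lemma qclass_rep (p : qcarrier th) : qclass th (qrep p) = p.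
Proof.
rewrite /qrep; case: p => P HP /=.
by case: (constructive_indefinite_description _ HP) => a Ha /=; apply: subset_eq_compat.
Qed.

Lemma rep_rel x : th (qrep (qclass th x)) x.
Proof. by apply/qclass_eq; rewrite qclass_rep. Qed.

Lemma interp_qclass o (a : 'I_(arity o) -> A) :
  qclass th (interp a) = @interp s (quotient th) o (fun i => qclass th (a i)).
Proof.
apply/qclass_eq; case: Hth => _ [Hs [_ Hc]].
by apply: Hc => i; apply/Hs/rep_rel.
Qed.

Lemma eval_quot X (t : term s X) (env : X -> A) (env' : X -> quotient th) :
  (forall v, env' v = qclass th (env v)) -> eval env' t = qclass th (eval env t).
Proof.
move=> He; elim: t => [x|o ts IH] /=; first exact: He.
apply/qclass_eq; case: Hth => _ [_ [_ Hc]].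
by apply: Hc => i; rewrite IH; apply: rep_rel.
Qed.

Definition lift (ps : rel_of A) : rel_of (quotient th) :=
  fun p q => ps (qrep p) (qrep q).
Definition pull (ps : rel_of (quotient th)) : rel_of A :=
  fun a b => ps (qclass th a) (qclass th b).

Lemma lift_class (ps : rel_of A) x y :
  is_con ps -> rsub th ps -> lift ps (qclass th x) (qclass th y) <-> ps x y.
Proof.
move=> [_ [Hs [Ht _]]] Hsub; rewrite /lift.
have Rx := Hsub _ _ (rep_rel x); have Ry := Hsub _ _ (rep_rel y).
split=> H; first exact: Ht (Hs _ _ Rx) (Ht _ _ _ H Ry).
exact: Ht Rx (Ht _ _ _ H (Hs _ _ Ry)).
Qed.

Lemma lift_con (ps : rel_of A) : is_con ps -> rsub th ps -> is_con (lift ps).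
Proof.
move=> Hps Hsub; case: (Hps) => Hr [Hs [Ht Hc]].
split; [|split; [|split]]; rewrite /lift.
- by move=> x; apply: Hr.
- by move=> x y; apply: Hs.
- by move=> x y z; apply: Ht.
- by move=> o a b H /=; apply/lift_class => //; apply: Hc.
Qed.

Lemma pull_con (ps : rel_of (quotient th)) : is_con ps -> is_con (pull ps).
Proof.
case=> Hr [Hs [Ht Hc]]; split; [|split; [|split]]; rewrite /pull.
- by move=> x; apply: Hr.
- by move=> x y; apply: Hs.
- by move=> x y z; apply: Ht.
- by move=> o a b H; rewrite !interp_qclass; apply: Hc.
Qed.

Lemma TC_pull (al be mu : rel_of (quotient th)) :
  TC al be mu -> TC (pull al) (pull be) (pull mu).
Proof.
move=> HTC n k t a b c d Hab Hcd; rewrite /pull.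
have E (a0 : 'I_n -> A) (c0 : 'I_k -> A) : qclass th (eval (sumenv a0 c0) t) =
    @eval s (quotient th) _ (sumenv (fun i => qclass th (a0 i)) (fun j => qclass th (c0 j))) t.
  by symmetry; apply: eval_quot => -[].
by rewrite !E; apply: HTC.
Qed.

Lemma TC_lift (al be mu : rel_of A) :
  is_con mu -> rsub th mu -> TC al be mu -> TC (lift al) (lift be) (lift mu).
Proof.
move=> Hmu Hsub HTC n k t a b c d Hab Hcd.
have E (a0 : 'I_n -> quotient th) (c0 : 'I_k -> quotient th) : eval (sumenv a0 c0) t =
    qclass th (eval (sumenv (fun i => qrep (a0 i)) (fun j => qrep (c0 j))) t).
  by apply: eval_quot => -[i|j] /=; rewrite qclass_rep.
by rewrite !E !lift_class //; apply: HTC.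
Qed.

End Quotient.

Arguments lift {s A} th ps _ _.
Arguments pull {s A th} ps _ _.

Section PrimeCorrespondence.
Variables (s : signature) (A : algebra s) (th : rel_of A).
Hypothesis Hth : is_con th.

(* A prime ψ ⊇ θ of A gives a prime ψ/θ of A/θ: commutators in A/θ pull back
   into commutators in A. *)
Lemma prime_lift (ps : rel_of A) :
  prime_con ps -> rsub th ps -> prime_con (lift th ps).
Proof.
move=> [Hps [HN Hpr]] Hsub; split; first exact: lift_con.
split=> [[_ E]|al be Hal Hbe H].
  by apply: HN; split=> // x y _; apply: (proj1 (lift_class Hth _ _ Hps Hsub)); apply: E.
have Hcomm : rsub (comm (pull al) (pull be)) ps.
  move=> x y Hxy; apply: (proj1 (lift_class Hth _ _ Hps Hsub)); apply: H => mu Hmu TCmu.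
  exact: Hxy (pull mu) (pull_con Hth Hmu) (TC_pull Hth TCmu).
case: (Hpr _ _ (pull_con Hth Hal) (pull_con Hth Hbe) Hcomm) => Hs;
  [left | right] => p q Hpq; apply: Hs; by rewrite /pull !qclass_rep.
Qed.

Lemma radical_quotient_semiprime :
  rsub (rho th) th -> semiprime (quotient th).
Proof.
move=> Hrad; apply: semiprimeP => p q H.
rewrite -(qclass_rep p) -(qclass_rep q); apply/(qclass_eq Hth)/Hrad => ps Hps Hsub.
apply: (H _ (prime_lift Hps Hsub)).
exact: Delta_min (lift_con Hth (proj1 Hps) Hsub).
Qed.

(* Conversely, for θ ⊆ Δ the projection is an isomorphism, so every prime of
   A/θ pulls back to a prime of A and semiprimeness descends. *)
Hypothesis HthD : rsub th (Delta A).

Lemma below_Delta (al : rel_of A) : is_con al -> rsub th al.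
Proof. by move=> Hal x y /HthD; apply: Delta_min. Qed.

Lemma prime_pull (ps : rel_of (quotient th)) : prime_con ps -> prime_con (pull ps).
Proof.
move=> [Hps [HN Hpr]]; split; first exact: pull_con.
split=> [[_ E]|al be Hal Hbe H].
  by apply: HN; split=> // p q _; rewrite -(qclass_rep p) -(qclass_rep q); apply: E.
have Hal' := lift_con Hth Hal (below_Delta Hal).
have Hbe' := lift_con Hth Hbe (below_Delta Hbe).
have Hcomm : rsub (comm (lift th al) (lift th be)) ps.
  move=> p q Hpq; rewrite -(qclass_rep p) -(qclass_rep q); apply: H => mu Hmu TCmu.
  exact: Hpq _ (lift_con Hth Hmu (below_Delta Hmu)) (TC_lift Hth Hmu (below_Delta Hmu) TCmu).
case: (Hpr _ _ Hal' Hbe' Hcomm) => Hs; [left | right] => x y Hxy; apply: Hs;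
  by apply/lift_class => //; apply: below_Delta.
Qed.

Lemma trivial_quotient_semiprime : semiprime (quotient th) -> semiprime A.
Proof.
move=> [Hsp _]; apply: semiprimeP => x y Hr; apply/HthD/(qclass_eq Hth)/Hsp => ps Hps _.
apply: (Hr _ (prime_pull Hps)).
exact: Delta_min (pull_con Hth (proj1 Hps)).
Qed.

End PrimeCorrespondence.

Section Annihilator.
Variables (s : signature) (A : algebra s) (th : rel_of A).
Hypothesis Hth : is_con th.

Lemma perp_sub_prime (phi : rel_of A) :
  prime_con phi -> ~ rsub th phi -> rsub (perp th) phi.
Proof.
move=> [Hphi [_ Hpr]] Hn; apply: cg_min => // x y [al [[Hal [HD _]] Hxy]].
case: (Hpr al th Hal Hth) => // [|Hs]; last exact: Hs.
by move=> u v /HD ->; apply: (proj1 Hphi).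
Qed.

(* In a semiprime algebra every annihilator is radical: the meet of the primes
   not containing θ annihilates θ, hence equals θ^⊥. *)
Lemma perp_radical : semiprime A -> rsub (rho (perp th)) (perp th).
Proof.
move=> [Hsp _].
pose avoid : rel_of A := fun x y => forall phi, prime_con phi /\ ~ rsub th phi -> phi x y.
have Havoid : is_con avoid by apply: meet_con => phi [[]].
have Hann : releq (comm avoid th) (Delta A).
  split; last exact: comm_refl.
  move=> u v Huv; apply: Hsp => phi Hp _.
  case: (classic (rsub th phi)) => Hs; first exact/Hs/(comm_subr Hth Huv).
  exact: (comm_subl Havoid Huv) phi (conj Hp Hs).
move=> x y Hr; apply: cg_sub; exists avoid; split=> // phi [Hp Hn].
exact: Hr _ Hp (perp_sub_prime Hp Hn).
Qed.

End Annihilator.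

Lemma perp_Nabla_trivial s (A : algebra s) :
  (forall al : rel_of A, is_con al -> rsub al (comm al (Nabla A))) ->
  rsub (perp (Nabla A)) (Delta A).
Proof.
move=> Hcomm; apply: cg_min; first exact: Delta_con.
by move=> x y [al [[Hal [HD _]] Hxy]]; apply: HD; apply: (Hcomm al Hal).
Qed.

Theorem mainTheorem4 (s : signature) (Sigma : term s nat -> term s nat -> Prop)
  (HV : congruence_modular_variety Sigma)
  (A : algebra s) (HA : models A Sigma)
  (Hcomm : forall th : rel_of A, is_con th -> releq (comm th (Nabla A)) th) :
  (forall th : rel_of A, is_con th -> semiprime (quotient (perp th))) <->
  semiprime A.
Proof.
split=> [Hq | Hsp th Hth].
- have HD : rsub (perp (Nabla A)) (Delta A).
    by apply: perp_Nabla_trivial => al Hal; apply: (proj2 (Hcomm al Hal)).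
  exact: trivial_quotient_semiprime (cg_con _) HD (Hq _ (Nabla_con A)).
- apply: radical_quotient_semiprime; first exact: cg_con.
  exact: perp_radical.
Qed.
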